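(* Let $F$ be the 0-1 loss $F(z)=\mathbb{1}(z<0)$, the hinge loss $F(z)=(1-z)_+$, or the psi-loss $F(z)=2\min(1,(1-z)_+)$. Let $(\boldsymbol X_i,Y_i)_{i\in[n]}$ be an arbitrary sample with $\boldsymbol X_i\in\mathbb{R}^{d_1\times d_2}$, $\|\boldsymbol X_i\|_F\le1$, $Y_i\in\mathbb{R}$, and let $\pi\in\mathbb{R}$, $\lambda\ge0$. Consider $$\min_{(\boldsymbol B,b):\ \mathrm{rank}(\boldsymbol B)\le r,\ \mathrm{supp}(\boldsymbol B)\le(s_1,s_2)}\ \frac1n\sum_{i=1}^n|Y_i-\pi|\,F\big([\langle\boldsymbol X_i,\boldsymbol B\rangle+b]\,\mathrm{sgn}(Y_i-\pi)\big)+\lambda\|\boldsymbol B\|_F^2 .$$ If this problem admits a global optimizer, then there exists a global optimizer $(\boldsymbol B_{\mathrm{opt}},b_{\mathrm{opt}})$ with $|b_{\mathrm{opt}}|\le\|\boldsymbol B_{\mathrm{opt}}\|_F+1$.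
   Context: $\mathrm{sgn}(x)=1$ if $x>0$, $-1$ otherwise. $\langle\boldsymbol X,\boldsymbol B\rangle=\mathrm{tr}(\boldsymbol X\boldsymbol B^T)$. $\mathrm{supp}(\boldsymbol B)\le(s_1,s_2)$ means $\boldsymbol B$ has at most $s_1$ nonzero rows and at most $s_2$ nonzero columns. $z_+=\max(z,0)$. *)

From HB Require Import structures.
From mathcomp Require Import all_boot all_order all_algebra.
Set Implicit Arguments. Unset Strict Implicit. Unset Printing Implicit Defensive.
Import Order.TTheory GRing.Theory Num.Theory.
Local Open Scope ring_scope.

Section Defs.
Variable R : rcfType.

Definition sgn (x : R) : R := if 0 < x then 1 else -1.

Definition frob_inner (d1 d2 : nat) (X B : 'M[R]_(d1, d2)) : R := \tr (X *m B^T).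

Definition frob_norm (d1 d2 : nat) (B : 'M[R]_(d1, d2)) : R :=
  Num.sqrt (\sum_(i < d1) \sum_(j < d2) B i j ^+ 2).

Definition supp_le (d1 d2 : nat) (B : 'M[R]_(d1, d2)) (s1 s2 : nat) : bool :=
  (#|[set i : 'I_d1 | row i B != 0%R]| <= s1)%N &&
  (#|[set j : 'I_d2 | col j B != 0%R]| <= s2)%N.

Inductive loss_kind := ZeroOne | Hinge | PsiLoss.

Definition lossF (k : loss_kind) (z : R) : R :=
  match k with
  | ZeroOne => if z < 0 then 1 else 0
  | Hinge => Num.max (1 - z) 0
  | PsiLoss => 2 * Num.min 1 (Num.max (1 - z) 0)
  end.

Definition feasible (d1 d2 r s1 s2 : nat) (B : 'M[R]_(d1, d2)) : Prop :=
  (\rank B <= r)%N /\ supp_le B s1 s2.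

Definition objective (k : loss_kind) (n d1 d2 : nat)
  (X : 'I_n -> 'M[R]_(d1, d2)) (Y : 'I_n -> R) (pi lambda : R)
  (B : 'M[R]_(d1, d2)) (b : R) : R :=
  n%:R^-1 * (\sum_(i < n) `|Y i - pi| * lossF k ((frob_inner (X i) B + b) * sgn (Y i - pi)))
  + lambda * frob_norm B ^+ 2.

Definition is_global_opt (k : loss_kind) (n d1 d2 r s1 s2 : nat)
  (X : 'I_n -> 'M[R]_(d1, d2)) (Y : 'I_n -> R) (pi lambda : R)
  (B : 'M[R]_(d1, d2)) (b : R) : Prop :=
  feasible r s1 s2 B /\
  forall (B' : 'M[R]_(d1, d2)) (b' : R), feasible r s1 s2 B' ->
    objective k X Y pi lambda B b <= objective k X Y pi lambda B' b'.
End Defs.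

(** Clamping the intercept b to [-(|B|_F + 1), |B|_F + 1] never increases the
    objective.  By Cauchy-Schwarz every margin <X_i, B> lies in
    [-|B|_F, |B|_F], so whenever clamping moves b, each signed margin either
    increases, and the loss is nonincreasing, or ends up at least 1, where the
    loss attains its minimum. *)

From HB Require Import structures.
From mathcomp Require Import all_boot all_order all_algebra.
From mathcomp Require Import ring lra.
Set Implicit Arguments. Unset Strict Implicit. Unset Printing Implicit Defensive.
Import Order.TTheory GRing.Theory Num.Theory.
Local Open Scope ring_scope.

Section Clamp.
Variable R : realDomainType.

Definition clamp (c x : R) : R := Num.min c (Num.max (- c) x).

Lemma norm_clamp (c x : R) : 0 <= c -> `|clamp c x| <= c.
Proof.
move=> c0; rewrite ler_norml /clamp ge_min lexx andbT le_min le_max lexx /=; lra.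
Qed.

Lemma clampN (c x : R) : 0 <= c -> clamp c (- x) = - clamp c x.
Proof.
move=> c0; rewrite /clamp real_oppr_min ?num_real // real_oppr_max ?num_real //.
by rewrite opprK max_minr [Num.max (- c) c]max_r //; lra.
Qed.

Lemma clamp_lt (c x : R) : clamp c x < x -> clamp c x = c.
Proof.
rewrite /clamp; case: (lerP c (Num.max (- c) x)) => [|_] //.
by rewrite ltNge le_max lexx orbT.
Qed.

End Clamp.

Section ClampMarginLoss.
Variables (R : realDomainType) (F : R -> R).
Hypothesis F_nonincr : {homo F : x y /~ x <= y}.
Hypothesis F_min1 : forall z, F 1 <= F z.

Lemma loss_clamp (a b c : R) :
  `|a| <= c -> F (a + clamp (c + 1) b) <= F (a + b).
Proof.
move=> ac; have [lt_clamp_b | le_b_clamp] := ltP (clamp (c + 1) b) b.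
- rewrite (clamp_lt lt_clamp_b); apply: le_trans (F_min1 _); apply: F_nonincr.
  by move: ac; rewrite ler_norml => /andP[? _]; lra.
- by apply: F_nonincr; rewrite lerD2l.
Qed.

Lemma loss_clamp_signed (s a b c : R) : s = 1 \/ s = -1 ->
  `|a| <= c -> F ((a + clamp (c + 1) b) * s) <= F ((a + b) * s).
Proof.
move=> [->|->] ac; rewrite ?mulr1 ?mulrN1; first exact: loss_clamp.
have c1 : 0 <= c + 1 by have := le_trans (normr_ge0 a) ac; lra.
by rewrite !opprD -clampN //; apply: loss_clamp; rewrite normrN.
Qed.

End ClampMarginLoss.

Lemma lossF_nonincr (R : rcfType) (k : loss_kind) :
  {homo lossF (R := R) k : x y /~ x <= y}.
Proof.
have hinge (x y : R) : x <= y -> Num.max (1 - y) 0 <= Num.max (1 - x) 0.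
  by move=> xy; rewrite le_max2 // lerD2l lerN2.
move=> x y xy; case: k => /=.
- by case: (ltP y 0); case: (ltP x 0) => //; lra.
- exact: hinge.
- by rewrite ler_wpM2l // le_min2 // hinge.
Qed.

Lemma lossF_ge0 (R : rcfType) (k : loss_kind) (z : R) : 0 <= lossF k z.
Proof.
case: k => /=.
- by case: ifP.
- by rewrite le_max lexx orbT.
- by rewrite mulr_ge0 // le_min ler01 le_max lexx orbT.
Qed.

Lemma lossF_min1 (R : rcfType) (k : loss_kind) (z : R) : lossF k 1 <= lossF k z.
Proof.
have -> : lossF k (1 : R) = 0.
  by case: k => /=; rewrite ?ltr10 // subrr maxxx ?(min_r ler01) ?mulr0.
exact: lossF_ge0.
Qed.

Lemma sgn_pm1 (R : rcfType) (x : R) : sgn x = 1 \/ sgn x = -1.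
Proof. by rewrite /sgn; case: ifP; [left | right]. Qed.

Lemma lagrange_identity (R : comPzRingType) (I : finType) (u v : I -> R) :
  ((\sum_i u i ^+ 2) * (\sum_i v i ^+ 2) - (\sum_i u i * v i) ^+ 2) *+ 2 =
  \sum_i \sum_j (u i * v j - u j * v i) ^+ 2.
Proof.
pose P := \sum_i \sum_j u i ^+ 2 * v j ^+ 2.
pose T := \sum_i \sum_j (u i * v i) * (u j * v j).
have PC : \sum_i \sum_j u j ^+ 2 * v i ^+ 2 = P by rewrite exchange_big.
have -> : \sum_i \sum_j (u i * v j - u j * v i) ^+ 2 = P + P - T *+ 2.
  rewrite -{2}PC -sumrMnl -big_split /= -sumrB; apply: eq_bigr => i _.
  by rewrite -sumrMnl -big_split /= -sumrB; apply: eq_bigr => j _; ring.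
by rewrite big_distrlr expr2 big_distrlr -/P -/T mulrnBl mulr2n.
Qed.

Lemma sum_mul_sqr_le (R : realDomainType) (I : finType) (u v : I -> R) :
  (\sum_i u i * v i) ^+ 2 <= (\sum_i u i ^+ 2) * (\sum_i v i ^+ 2).
Proof.
rewrite -subr_ge0 -(pmulrn_lge0 _ (isT : (0 < 2)%N)) lagrange_identity.
by apply: sumr_ge0 => i _; apply: sumr_ge0 => j _; exact: sqr_ge0.
Qed.

Section Frobenius.
Variables (R : rcfType) (d1 d2 : nat).
Implicit Types X B : 'M[R]_(d1, d2).

Lemma frob_innerE X B : frob_inner X B = \sum_i \sum_j X i j * B i j.
Proof.
rewrite /frob_inner /mxtrace; apply: eq_bigr => i _; rewrite mxE.
by apply: eq_bigr => j _; rewrite mxE.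
Qed.

Lemma frob_norm_ge0 B : 0 <= frob_norm B.
Proof. exact: sqrtr_ge0. Qed.

Lemma frob_inner_le X B : `|frob_inner X B| <= frob_norm X * frob_norm B.
Proof.
have sqr_sum_ge0 A : 0 <= \sum_i \sum_j A i j ^+ 2 :> R.
  by apply: sumr_ge0 => i _; apply: sumr_ge0 => j _; exact: sqr_ge0.
rewrite frob_innerE /frob_norm -sqrtrM // -sqrtr_sqr ler_sqrt ?mulr_ge0 //.
rewrite !pair_big; exact: sum_mul_sqr_le.
Qed.

Lemma frob_inner_le_norm X B : frob_norm X <= 1 -> `|frob_inner X B| <= frob_norm B.
Proof.
by move=> X1; apply: le_trans (frob_inner_le X B) _; rewrite ler_piMl ?frob_norm_ge0.
Qed.

End Frobenius.

Lemma objective_clamp_intercept (R : rcfType) (k : loss_kind) (n d1 d2 : nat)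
  (X : 'I_n -> 'M[R]_(d1, d2)) (Y : 'I_n -> R) (pi lambda : R)
  (B : 'M[R]_(d1, d2)) (b : R) :
  (forall i, frob_norm (X i) <= 1) ->
  objective k X Y pi lambda B (clamp (frob_norm B + 1) b)
    <= objective k X Y pi lambda B b.
Proof.
move=> hX; rewrite /objective lerD2r ler_wpM2l ?invr_ge0 ?ler0n //.
apply: ler_sum => i _; rewrite ler_wpM2l ?normr_ge0 //.
apply: loss_clamp_signed; [exact: lossF_nonincr | exact: lossF_min1 |
  exact: sgn_pm1 | exact: frob_inner_le_norm].
Qed.

Theorem lemma1 (R : rcfType) (k : loss_kind) (n d1 d2 r s1 s2 : nat)
  (X : 'I_n -> 'M[R]_(d1, d2)) (Y : 'I_n -> R) (pi lambda : R)
  (hX : forall i, frob_norm (X i) <= 1) (hlambda : 0 <= lambda) :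
  (exists (B : 'M[R]_(d1, d2)) (b : R), is_global_opt k r s1 s2 X Y pi lambda B b) ->
  exists (Bopt : 'M[R]_(d1, d2)) (bopt : R),
    is_global_opt k r s1 s2 X Y pi lambda Bopt bopt /\
    `|bopt| <= frob_norm Bopt + 1.
Proof.
move=> [B [b [feasB optB]]]; exists B, (clamp (frob_norm B + 1) b); split.
- split=> // B' b' feasB'; apply: le_trans (optB B' b' feasB').
  exact: objective_clamp_intercept.
- by rewrite norm_clamp // addr_ge0 ?frob_norm_ge0.
Qed.
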